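(* Let $m\ge2$ and $G=\langle x_1,x_2\mid c_{12}^m,\ \overline{c_{12}^{(x_1)}}\,c_{12}^{a_1},\ \overline{c_{12}^{(x_2)}}\,c_{12}^{a_2}\rangle$ with $a_1,a_2$ coprime to $m$, whose commutator subgroup $C$ is cyclic of order $m$ generated by $c_{12}$, and let $Z_{CG}=Z(G)\cap C$. If $\{x_1,x_2\}\subset\mathcal C_G(C)$ (equivalently $a_1=a_2=1$), then $Z_{CG}=C$. Otherwise, $Z_{CG}$ is non-trivial if and only if $\gcd(a_1-1,a_2-1,m)\neq1$.
   Context: Notation: $\bar g=g^{-1}$, $c_{gh}=\bar g\,\bar h\,g\,h$, $c^{(g)}=\bar g\,c\,g$, $c_{12}=c_{x_1x_2}$; $\mathcal C_G(C)$ is the centralizer of $C$ and $Z(G)$ the center of $G$. *)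

From Stdlib Require Export ZArith.
Open Scope Z_scope.

Record Grp := {
  gcar :> Type;
  gmul : gcar -> gcar -> gcar;
  gone : gcar;
  ginv : gcar -> gcar;
  gassoc : forall x y z, gmul x (gmul y z) = gmul (gmul x y) z;
  gmul1l : forall x, gmul gone x = x;
  gmul1r : forall x, gmul x gone = x;
  gmulVl : forall x, gmul (ginv x) x = gone;
  gmulVr : forall x, gmul x (ginv x) = gone }.

Arguments gmul {g}. Arguments gone {g}. Arguments ginv {g}.

Fixpoint npow {G : Grp} (x : G) (n : nat) : G :=
  match n with O => gone | S n => gmul x (npow x n) end.

Definition zpow {G : Grp} (x : G) (k : Z) : G :=
  if (0 <=? k) then npow x (Z.to_nat k) else ginv (npow x (Z.to_nat (- k))).

Definition comm {G : Grp} (g h : G) : G :=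
  gmul (gmul (ginv g) (ginv h)) (gmul g h).

Definition conjg {G : Grp} (c g : G) : G := gmul (gmul (ginv g) c) g.

Inductive gen_by {G : Grp} (S : G -> Prop) : G -> Prop :=
  | gen_one : gen_by S gone
  | gen_in  : forall s, S s -> gen_by S s
  | gen_inv : forall g, gen_by S g -> gen_by S (ginv g)
  | gen_mul : forall g h, gen_by S g -> gen_by S h -> gen_by S (gmul g h).

Definition commutator_subgroup (G : Grp) : G -> Prop :=
  gen_by (fun c => exists g h : G, c = comm g h).

Definition central {G : Grp} (g : G) : Prop := forall h, gmul g h = gmul h g.

Definition centralizes {G : Grp} (g : G) (A : G -> Prop) : Prop :=
  forall c, A c -> gmul g c = gmul c g.

Definition is_hom {G H : Grp} (f : G -> H) : Prop :=
  forall x y, f (gmul x y) = gmul (f x) (f y).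

Definition rels_hold {H : Grp} (m a1 a2 : Z) (y1 y2 : H) : Prop :=
  zpow (comm y1 y2) m = gone /\
  gmul (ginv (conjg (comm y1 y2) y1)) (zpow (comm y1 y2) a1) = gone /\
  gmul (ginv (conjg (comm y1 y2) y2)) (zpow (comm y1 y2) a2) = gone.

Definition is_presentation (G : Grp) (x1 x2 : G) (m a1 a2 : Z) : Prop :=
  (forall g : G, gen_by (fun y => y = x1 \/ y = x2) g) /\
  rels_hold m a1 a2 x1 x2 /\
  (forall (H : Grp) (h1 h2 : H), rels_hold m a1 a2 h1 h2 ->
     exists f : G -> H, is_hom f /\ f x1 = h1 /\ f x2 = h2 /\
       forall f' : G -> H, is_hom f' -> f' x1 = h1 -> f' x2 = h2 ->
         forall g, f' g = f g).

(* Conjugation by x_i acts on the cyclic group C = <c> as c |-> c^(a_i), so c^k commutes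
   with x_i exactly when m divides (a_i - 1) k.  As G is generated by x_1 and x_2, c^k is
   central iff both divisibilities hold.  If x_1, x_2 centralize C this is automatic;
   in general some k with m not dividing k satisfies both iff the a_i - 1 share a factor
   with m, the witness being k = m / gcd(a_1 - 1, a_2 - 1, m). *)
From Stdlib Require Import ZArith Lia.
Open Scope Z_scope.

Section GroupFacts.
Context {G : Grp}.

Lemma mulg_cancel_l (x y z : G) : gmul x y = gmul x z -> y = z.
Proof.
  intro H.
  rewrite <- (gmul1l G y), <- (gmul1l G z), <- (gmulVl G x), <- !gassoc, H.
  reflexivity.
Qed.

Lemma invg_unique (x y : G) : gmul x y = gone -> y = ginv x.
Proof. intro H. apply (mulg_cancel_l x). rewrite H, gmulVr. reflexivity. Qed.

Lemma invg1 : ginv (@gone G) = gone.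
Proof. symmetry. apply invg_unique, gmul1l. Qed.

Lemma invgM (x y : G) : ginv (gmul x y) = gmul (ginv y) (ginv x).
Proof.
  symmetry. apply invg_unique.
  rewrite <- gassoc, (gassoc _ y), gmulVr, gmul1l, gmulVr. reflexivity.
Qed.

Lemma invgK (x : G) : ginv (ginv x) = x.
Proof. symmetry. apply invg_unique, gmulVl. Qed.

Lemma mulVg_eq1 (x y : G) : gmul (ginv x) y = gone <-> x = y.
Proof.
  split; intro H.
  - apply (mulg_cancel_l (ginv x)). rewrite H, gmulVl. reflexivity.
  - rewrite H. apply gmulVl.
Qed.

Lemma mulgV_eq1 (x y : G) : gmul x (ginv y) = gone <-> x = y.
Proof.
  split; intro H.
  - rewrite <- (invgK x), <- (invg_unique _ _ H), invgK. reflexivity.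
  - rewrite H. apply gmulVr.
Qed.

Lemma npow_commute (x : G) n : gmul x (npow x n) = gmul (npow x n) x.
Proof.
  induction n as [|n IH]; simpl.
  - rewrite gmul1l, gmul1r. reflexivity.
  - rewrite <- gassoc, IH. reflexivity.
Qed.

Lemma zpow_of_nat (x : G) (n : nat) : zpow x (Z.of_nat n) = npow x n.
Proof.
  unfold zpow. destruct (Z.leb_spec 0 (Z.of_nat n)); [|lia].
  rewrite Nat2Z.id. reflexivity.
Qed.

Lemma zpow_opp_of_nat (x : G) (n : nat) : zpow x (- Z.of_nat n) = ginv (npow x n).
Proof.
  unfold zpow. destruct n as [|n].
  - simpl. rewrite invg1. reflexivity.
  - destruct (Z.leb_spec 0 (- Z.of_nat (S n))); [lia|].
    rewrite Z.opp_involutive, Nat2Z.id. reflexivity.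
Qed.

Lemma zpowS (x : G) k : zpow x (Z.succ k) = gmul x (zpow x k).
Proof.
  destruct (Z.le_gt_cases 0 k) as [k_ge0 | k_lt0].
  - destruct (Z_of_nat_complete k k_ge0) as [n ->].
    replace (Z.succ (Z.of_nat n)) with (Z.of_nat (S n)) by lia.
    rewrite !zpow_of_nat. reflexivity.
  - replace k with (- Z.of_nat (S (Z.to_nat (- k - 1)))) by lia.
    set (n := Z.to_nat (- k - 1)).
    replace (Z.succ (- Z.of_nat (S n))) with (- Z.of_nat n) by lia.
    rewrite !zpow_opp_of_nat. simpl.
    rewrite npow_commute, invgM, gassoc, gmulVr, gmul1l. reflexivity.
Qed.

Lemma zpowP (x : G) k : zpow x (Z.pred k) = gmul (ginv x) (zpow x k).
Proof.
  rewrite <- (Z.succ_pred k) at 2. rewrite zpowS, gassoc, gmulVl, gmul1l. reflexivity.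
Qed.

Lemma zpowD (x : G) i j : zpow x (i + j) = gmul (zpow x i) (zpow x j).
Proof.
  induction i as [|i IH|i IH] using Z.peano_ind.
  - simpl. rewrite gmul1l. reflexivity.
  - rewrite Z.add_succ_l, !zpowS, IH, gassoc. reflexivity.
  - rewrite Z.add_pred_l, !zpowP, IH, gassoc. reflexivity.
Qed.

Lemma zpowN (x : G) i : zpow x (- i) = ginv (zpow x i).
Proof.
  apply invg_unique. rewrite <- zpowD, Z.add_opp_diag_r. reflexivity.
Qed.

Lemma zpowM (x : G) i j : zpow (zpow x i) j = zpow x (i * j).
Proof.
  induction j as [|j IH|j IH] using Z.peano_ind.
  - rewrite Z.mul_0_r. reflexivity.
  - rewrite zpowS, IH, <- zpowD. f_equal. lia.
  - rewrite zpowP, IH, <- zpowN, <- zpowD. f_equal. lia.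
Qed.

Lemma zpow_eq_iff (x : G) i j : zpow x i = zpow x j <-> zpow x (i - j) = gone.
Proof. rewrite <- Z.add_opp_r, zpowD, zpowN, mulgV_eq1. reflexivity. Qed.

Lemma conjgM (x y g : G) : conjg (gmul x y) g = gmul (conjg x g) (conjg y g).
Proof.
  unfold conjg. rewrite <- !gassoc. do 2 f_equal.
  rewrite (gassoc _ g), gmulVr, gmul1l. reflexivity.
Qed.

Lemma conjgV (x g : G) : conjg (ginv x) g = ginv (conjg x g).
Proof. unfold conjg. rewrite !invgM, invgK, gassoc. reflexivity. Qed.

Lemma conjg_zpow (x g : G) k : conjg (zpow x k) g = zpow (conjg x g) k.
Proof.
  induction k as [|k IH|k IH] using Z.peano_ind.
  - unfold conjg. simpl. rewrite gmul1r, gmulVl. reflexivity.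
  - rewrite !zpowS, conjgM, IH. reflexivity.
  - rewrite !zpowP, conjgM, IH, conjgV. reflexivity.
Qed.

Lemma commute_iff_conjg_eq (h x : G) : gmul h x = gmul x h <-> conjg h x = h.
Proof.
  unfold conjg. split; intro H.
  - rewrite <- gassoc, H, gassoc, gmulVl, gmul1l. reflexivity.
  - rewrite <- H at 2. rewrite <- !gassoc, (gassoc _ x), gmulVr, gmul1l. reflexivity.
Qed.

Lemma central_of_commute_generators (x1 x2 g : G) :
  (forall h : G, gen_by (fun y => y = x1 \/ y = x2) h) ->
  gmul g x1 = gmul x1 g -> gmul g x2 = gmul x2 g -> central g.
Proof.
  intros gen12 g_x1 g_x2 h.
  induction (gen12 h) as [|s Hs|h _ IH|h1 h2 _ IH1 _ IH2].
  - rewrite gmul1l, gmul1r. reflexivity.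
  - destruct Hs as [-> | ->]; assumption.
  - apply (mulg_cancel_l h).
    rewrite (gassoc _ h g), <- IH, <- gassoc, gmulVr, gmul1r, gassoc, gmulVr, gmul1l.
    reflexivity.
  - rewrite gassoc, IH1, <- gassoc, IH2, gassoc. reflexivity.
Qed.

Section CyclicSubgroup.

Variables (c : G) (m : Z).
Hypothesis order_c : forall j, zpow c j = gone <-> (m | j).

Lemma commute_zpow_iff (x : G) (a k : Z) :
  conjg c x = zpow c a ->
  gmul (zpow c k) x = gmul x (zpow c k) <-> (m | (a - 1) * k).
Proof.
  intro cx.
  rewrite commute_iff_conjg_eq, conjg_zpow, cx, zpowM, zpow_eq_iff, order_c.
  replace (a * k - k) with ((a - 1) * k) by ring.
  reflexivity.
Qed.

Lemma central_zpow_iff (x1 x2 : G) (a1 a2 k : Z) :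
  (forall g : G, gen_by (fun y => y = x1 \/ y = x2) g) ->
  conjg c x1 = zpow c a1 -> conjg c x2 = zpow c a2 ->
  central (zpow c k) <-> (m | (a1 - 1) * k) /\ (m | (a2 - 1) * k).
Proof.
  intros gen12 cx1 cx2.
  rewrite <- (commute_zpow_iff x1 a1 k cx1), <- (commute_zpow_iff x2 a2 k cx2).
  split.
  - intro central_ck. split; apply central_ck.
  - intros [H1 H2]. exact (central_of_commute_generators x1 x2 _ gen12 H1 H2).
Qed.

End CyclicSubgroup.

End GroupFacts.

Lemma gcd3_neq1_iff_common_annihilator (m b1 b2 : Z) : 0 < m ->
  (exists k, (m | b1 * k) /\ (m | b2 * k) /\ ~ (m | k)) <-> Z.gcd (Z.gcd b1 b2) m <> 1.
Proof.
  intro m_pos. split.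
  - intros [k [H1 [H2 ndiv]]] coprime. apply ndiv, Z.divide_abs_r.
    apply (Z.gauss m (Z.gcd b1 b2)).
    + rewrite <- Z.gcd_mul_mono_r. apply Z.gcd_greatest; assumption.
    + rewrite Z.gcd_comm. exact coprime.
  - set (d := Z.gcd (Z.gcd b1 b2) m). intro d_neq1.
    assert (d_b1 : (d | b1)) by
      (eapply Z.divide_trans; [apply Z.gcd_divide_l | apply Z.gcd_divide_l]).
    assert (d_b2 : (d | b2)) by
      (eapply Z.divide_trans; [apply Z.gcd_divide_l | apply Z.gcd_divide_r]).
    assert (d_m : (d | m)) by apply Z.gcd_divide_r.
    assert (d_ge0 : 0 <= d) by apply Z.gcd_nonneg.
    destruct d_m as [k m_eq].
    assert (d_ge2 : 2 <= d)
      by (destruct (Z.eq_dec d 0) as [d0 | ]; [rewrite d0 in m_eq; lia | lia]).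
    exists k. split; [|split].
    + destruct d_b1 as [q b1_eq]. exists q. rewrite b1_eq, m_eq. ring.
    + destruct d_b2 as [q b2_eq]. exists q. rewrite b2_eq, m_eq. ring.
    + intro m_k. apply Z.divide_pos_le in m_k; nia.
Qed.

Theorem corollary14p2 (G : Grp) (x1 x2 : G) (m a1 a2 : Z)
  (hm : 2 <= m) (ha1 : Z.gcd a1 m = 1) (ha2 : Z.gcd a2 m = 1)
  (hG : is_presentation G x1 x2 m a1 a2)
  (hCgen : forall g, commutator_subgroup G g <-> exists k : Z, g = zpow (comm x1 x2) k)
  (hCord : forall k : Z, zpow (comm x1 x2) k = gone <-> (m | k)) :
  ((centralizes x1 (commutator_subgroup G) /\ centralizes x2 (commutator_subgroup G)) ->
     forall g, (central g /\ commutator_subgroup G g) <-> commutator_subgroup G g) /\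
  (~ (centralizes x1 (commutator_subgroup G) /\ centralizes x2 (commutator_subgroup G)) ->
     ((exists g, central g /\ commutator_subgroup G g /\ g <> gone)
      <-> Z.gcd (Z.gcd (a1 - 1) (a2 - 1)) m <> 1)).
Proof.
  destruct hG as [gen12 [[_ [rel1 rel2]] _]].
  set (c := comm x1 x2) in *.
  rewrite mulVg_eq1 in rel1, rel2.
  split.
  - intros [cent1 cent2] g. split; [tauto|]. intro Cg. split; [|exact Cg].
    apply (central_of_commute_generators x1 x2 g gen12);
      symmetry; [apply cent1 | apply cent2]; exact Cg.
  - intros _. rewrite <- gcd3_neq1_iff_common_annihilator by lia.
    pose proof (fun k => central_zpow_iff c m hCord x1 x2 a1 a2 k gen12 rel1 rel2)
      as central_iff.
    split.
    + intros [g [central_g [Cg g_neq1]]]. apply hCgen in Cg as [k ->].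
      apply central_iff in central_g as [H1 H2].
      exists k. repeat split; try assumption. rewrite <- hCord. exact g_neq1.
    + intros [k [H1 [H2 ndiv]]]. exists (zpow c k). split; [|split].
      * apply central_iff. split; assumption.
      * apply hCgen. exists k. reflexivity.
      * rewrite hCord. exact ndiv.
Qed.
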